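(* In the setting below, suppose $\max_{g\in G_-}|\delta(g)|\ge E_k-\lfloor E_k\rfloor_2+2$. Then there exists $g_{k+1}\in\mathrm{Co}_0$ such that $S_{k+1}=g_{k+1}S\setminus U_k$ satisfies $|S_{k+1}|\ge |S|+2-\lfloor E_k\rfloor_2$, and $S_1,\dots,S_{k+1}$ are pairwise disjoint.
   Context: Let $\Lambda_{24}$ be the Leech lattice scaled so minimal vectors have length $2$, $\mathcal C$ its $196560$ minimal vectors, and $\mathrm{Co}_0$ the finite group of linear isometries of $\mathbb{R}^{24}$ mapping $\Lambda_{24}$ onto itself (acting transitively on $\mathcal C$). Fix an antipodal ($S=-S$) set $S\subseteq\mathcal C$ with $\langle x,y\rangle\le1$ for distinct $x,y\in S$. Let $k\ge1$, $S_1=S$, $g_1=\mathrm{id}$, and for $2\le j\le k$, $S_j=g_jS\setminus(S_1\cup\dots\cup S_{j-1})$ for some $g_j\in\mathrm{Co}_0$, with $|S_j|\ge|S|\bigl(1-\sum_{i<j}|S_i|/|\mathcal C|\bigr)$. Put $U_k=S_1\cup\dots\cup S_k$, $E_k=\mathbb{E}_g|gS\cap U_k|$ ($g$ uniform in $\mathrm{Co}_0$). $\lfloor x\rfloor_2$ is the greatest even integer $\le x$. $\delta(g)=|gS\cap U_k|-E_k$, $G_-=\{g:\delta(g)<0\}$. *)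

From HB Require Import structures.
From mathcomp Require Import all_boot all_order all_fingroup all_algebra.
From mathcomp Require Import boolp reals.
Set Implicit Arguments. Unset Strict Implicit. Unset Printing Implicit Defensive.
Import Order.TTheory GRing.Theory Num.Theory.
Local Open Scope ring_scope.

(* Generated by the 12 rows below (bit i of the number = coordinate i);
   this is the extended quadratic-residue code of length 24, i.e. a binary
   Golay code (weight enumerator 1 + 759 z^8 + 2576 z^12 + 759 z^16 + z^24). *)
Definition golay_gens : seq nat :=
  [:: 8729438; 1005026; 1179174; 2927022; 5637822; 42195;
      84390; 145311; 290622; 15946; 17118; 7973]%N.

Definition golay_gen (j : 'I_12) (i : 'I_24) : bool :=
  odd (nth 0%N golay_gens j %/ 2 ^ i).

Definition golay (c : 'I_24 -> bool) : bool :=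
  [exists a : {ffun 'I_12 -> bool},
     [forall i : 'I_24, c i == odd (\sum_(j < 12) (a j && golay_gen j i))%N]].

(* x : Z^24 lies in sqrt(8) * Lambda_24 iff there is m in {0,1} with
   x_i = m (mod 2) for all i, the set {i | x_i = 2 (mod 4)} (m = 0), resp.
   {i | x_i = 1 (mod 4)} (m = 1), is a Golay codeword, and
   sum_i x_i = 4 m (mod 8).  (Conway--Sloane, SPLAG ch. 4 sec. 11.) *)
Definition leechZ (x : 'I_24 -> int) : bool :=
  ([forall i, (x i %% 2)%Z == 0] &&
   golay (fun i => (x i %% 4)%Z == 2) &&
   ((\sum_(i < 24) x i) %% 8 == 0)%Z)
  ||
  ([forall i, (x i %% 2)%Z == 1] &&
   golay (fun i => (x i %% 4)%Z == 1) &&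
   ((\sum_(i < 24) x i) %% 8 == 4)%Z).

Definition leechR {R : realType} (u : 'rV[R]_24) : Prop :=
  exists x : 'I_24 -> int, leechZ x /\ u = \row_i ((x i)%:~R / Num.sqrt 8).

(* Coordinates of sqrt(8)*v for a minimal vector v satisfy sum x_i^2 = 32,
   hence |x_i| <= 5; we encode x_i as an element of 'I_11 shifted by 5. *)
Definition bvec := {ffun 'I_24 -> 'I_11}.
Definition coord (v : bvec) (i : 'I_24) : int := (v i)%:Z - 5.

Definition minvecb (v : bvec) : bool :=
  leechZ (coord v) && (\sum_(i < 24) coord v i ^+ 2 == 32).

Definition Cmin := {v : bvec | minvecb v}.

Definition rv {R : realType} (c : Cmin) : 'rV[R]_24 :=
  \row_i ((coord (val c) i)%:~R / Num.sqrt 8).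

Definition inner {R : realType} (u w : 'rV[R]_24) : R := (u *m w^T) 0 0.

Definition Co0mx {R : realType} (M : 'M[R]_24) : Prop :=
  M *m M^T = 1%:M /\ (forall u : 'rV[R]_24, leechR u <-> leechR (u *m M)).

(* Co_0 represented faithfully through its (injective, since C spans R^24)
   permutation action on C: the permutations of C induced by some element. *)
Definition Co0 (R : realType) : {set {perm Cmin}} :=
  [set s : {perm Cmin} | `[< exists M : 'M[R]_24,
       Co0mx M /\ forall c : Cmin, rv (s c) = rv c *m M >]].

(* U S g j = S_1 u ... u S_j,  Sseq S g j = S_j = g_j S \ U_{j-1}   (j >= 1). *)
Fixpoint Useq (S : {set Cmin}) (g : nat -> {perm Cmin}) (j : nat)
  : {set Cmin} :=
  match j with
  | 0 => set0
  | j'.+1 => Useq S g j' :|: ((g j) @: S :\: Useq S g j')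
  end.

Definition Sseq (S : {set Cmin}) (g : nat -> {perm Cmin}) (j : nat)
  : {set Cmin} :=
  match j with
  | 0 => set0
  | j'.+1 => (g j) @: S :\: Useq S g j'
  end.

Definition Eexp (R : realType) (S U : {set Cmin}) : R :=
  (\sum_(s in Co0 R) (#|s @: S :&: U|%:R : R)) / (#|Co0 R|%:R).

Definition delta (R : realType) (S U : {set Cmin}) (s : {perm Cmin}) : R :=
  (#|s @: S :&: U|%:R : R) - Eexp R S U.

Definition Gminus (R : realType) (S U : {set Cmin}) : {set {perm Cmin}} :=
  [set s in Co0 R | delta R S U s < 0].

(* max over G_- of |delta| (all terms are >= 0, so the default 0 is harmless). *)
Definition maxdev (R : realType) (S U : {set Cmin}) : R :=
  \big[Num.max/0]_(s in Gminus R S U) `|delta R S U s|.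

Definition floor2 {R : realType} (x : R) : int := 2 * Num.floor (x / 2).

Definition extend (g : nat -> {perm Cmin}) (k : nat) (h : {perm Cmin}) :=
  fun j : nat => if j == k.+1 then h else g j.

(* Disjointness is built into the greedy construction, since each S_j is
   carved out of the complement of U_{j-1}.  For the size bound take g in G_-
   realising the maximal deviation: |gS n U_k| = E_k - |delta(g)| is at most
   floor2(E_k) - 2, so |gS \ U_k| = |S| - |gS n U_k| is at least
   |S| + 2 - floor2(E_k). *)
From HB Require Import structures.
From mathcomp Require Import all_boot all_order all_fingroup all_algebra.
From mathcomp Require Import boolp reals.
From mathcomp Require Import lra.
Import Order.TTheory GRing.Theory Num.Theory.
Local Open Scope ring_scope.

Section GreedySequence.

Variable S : {set Cmin}.

Lemma eq_Useq (g g' : nat -> {perm Cmin}) k :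
  (forall j, (j <= k)%N -> g j = g' j) -> Useq S g k = Useq S g' k.
Proof.
elim: k => [//|k IHk] eq_gg' /=.
rewrite eq_gg' // IHk // => j le_jk.
exact/eq_gg'/leqW.
Qed.

Lemma Useq_extend g k h : Useq S (extend g k h) k = Useq S g k.
Proof.
apply: eq_Useq => j le_jk.
by rewrite /extend ifN // neq_ltn ltnS le_jk.
Qed.

Lemma Sseq_extend g k h : Sseq S (extend g k h) k.+1 = h @: S :\: Useq S g k.
Proof. by rewrite /= Useq_extend /extend eqxx. Qed.

Lemma Useq_monotone g : {homo Useq S g : i j / (i <= j)%N >-> i \subset j}.
Proof.
move=> i j; elim: j => [|j IHj]; first by rewrite leqn0 => /eqP ->.
rewrite leq_eqVlt ltnS => /predU1P[-> // | le_ij].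
exact: subset_trans (IHj le_ij) (subsetUl _ _).
Qed.

Lemma Sseq_sub_Useq g i : Sseq S g i \subset Useq S g i.
Proof. by case: i => [|i] /=; [rewrite sub0set | apply: subsetUr]. Qed.

Lemma disjoint_Sseq g i j : (i < j)%N -> [disjoint Sseq S g i & Sseq S g j].
Proof.
case: j => [//|j]; rewrite ltnS => le_ij /=.
have sub_SiUj := subset_trans (Sseq_sub_Useq g i) (Useq_monotone g _ _ le_ij).
rewrite disjoint_sym; apply: disjointWr sub_SiUj _.
by rewrite disjoints_subset subsetDr.
Qed.

Lemma card_imset_perm_split (h : {perm Cmin}) (U : {set Cmin}) :
  (#|h @: S :&: U| + #|h @: S :\: U|)%N = #|S|.
Proof. by rewrite cardsID card_imset //; apply: perm_inj. Qed.

End GreedySequence.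

Section Deviation.

Context {R : realType} {S U : {set Cmin}}.

Lemma maxdev_attained : 0 < maxdev R S U ->
  exists2 s, s \in Gminus R S U & maxdev R S U = `|delta R S U s|.
Proof.
rewrite /maxdev; have [G0 | [s0 Gs0]] := set_0Vmem (Gminus R S U).
  by rewrite G0 big_set0 ltxx.
have [s Gs ->] := eq_bigmax s0 [in Gminus R S U] (fun s => `|delta R S U s|) Gs0
  (fun s _ => normr_ge0 _).
by exists s.
Qed.

Lemma card_meet_Gminus {s} : s \in Gminus R S U ->
  (#|s @: S :&: U|%:R : R) = Eexp R S U - `|delta R S U s|.
Proof. by rewrite inE => /andP[_ /ltr0_norm->]; rewrite opprK /delta addrC subrK. Qed.

End Deviation.

Lemma floor2_le {R : realType} (x : R) : (floor2 x)%:~R <= x.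
Proof.
have := floor_le (x / 2).
by rewrite /floor2 intrM; lra.
Qed.

Theorem lemma4p11 (R : realType) (S : {set Cmin}) (k : nat)
    (g : nat -> {perm Cmin})
    (HSanti : forall x, x \in S -> exists2 y, y \in S & rv y = - (rv x : 'rV[R]_24))
    (HSdot : forall x y, x \in S -> y \in S -> x != y ->
                inner (rv x : 'rV[R]_24) (rv y) <= 1)
    (Hk : (1 <= k)%N)
    (Hg1 : g 1%N = 1%g)
    (HgCo : forall j, (2 <= j <= k)%N -> g j \in Co0 R)
    (HSj : forall j, (2 <= j <= k)%N ->
       (#|S|%:R : R) * (1 - (\sum_(1 <= i < j) (#|Sseq S g i|%:R : R)) / #|{: Cmin}|%:R)
         <= #|Sseq S g j|%:R)
    (Hmax : Eexp R S (Useq S g k) - (floor2 (Eexp R S (Useq S g k)))%:~R + 2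
              <= maxdev R S (Useq S g k)) :
  exists h : {perm Cmin}, h \in Co0 R /\
    (#|S|%:R + 2 - (floor2 (Eexp R S (Useq S g k)))%:~R
       <= (#|Sseq S (extend g k h) k.+1|%:R : R)) /\
    (forall i j, (1 <= i)%N -> (i < j)%N -> (j <= k.+1)%N ->
       [disjoint Sseq S (extend g k h) i & Sseq S (extend g k h) j]).
Proof.
set U := Useq S g k in Hmax *; set E := Eexp R S U in Hmax *.
have floor2E := floor2_le E.
have [s Gs maxdev_s] : exists2 s, s \in Gminus R S U & maxdev R S U = `|delta R S U s|.
  by apply: maxdev_attained; lra.
have Co0s : s \in Co0 R by move: Gs; rewrite inE => /andP[].
exists s; split=> //; split; last by move=> i j _ lt_ij _; apply: disjoint_Sseq.
rewrite Sseq_extend -/U -(card_imset_perm_split S s U) natrD (card_meet_Gminus Gs) -/E.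
lra.
Qed.
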